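(* Let $\mathcal C$ be a Clifford circuit with linear outcome code $\mathcal O(\mathcal C)$, let $F$ be a fault operator and $u\in\mathcal O(\mathcal C)^\perp$. Then $\sum_{j=1}^m u_j\,[\overrightarrow F_{\ell_j-0.5},S_j]\equiv[F,\overleftarrow{F(u)}]\pmod 2$; that is, the faults $F$ flip the value of the outcome check $u$ if and only if $[F,\overleftarrow{F(u)}]=1$.
   Context: A Clifford circuit on $n$ qubits is a finite sequence of operations, each a unitary Clifford gate or the measurement of a Hermitian $n$-qubit Pauli, each with a level in $\{1,2,\dots\}$; operations of equal level have disjoint supports and levels are nondecreasing; depth $\Delta$ = maximal level. In circuit order the $j$-th measurement measures $S_j$ at level $\ell_j$ ($j=1,\dots,m$); outcome $o_j=0$ for eigenvalue $+1$, $1$ for $-1$. The outcome code $\mathcal O(\mathcal C)$ is the set of outcome bit-strings occurring with nonzero probability for some input state; $\perp$ refers to $(u|v)=\sum u_iv_i\bmod 2$. $\overline{\mathcal P}_N$ is the $N$-qubit Pauli group modulo phases; $[P,Q]\in\mathbb Z_2$ is $0$ iff $P,Q$ commute. $U_\ell$ is the product of unitary gates of level $\ell$ (identity if none). Fault operators $F\in\overline{\mathcal P}_{n(\Delta+1)}$ act on qubits $(\ell+0.5,q)$, $0\le\ell\le\Delta$, $1\le q\le n$, with level components $F_{\ell+0.5}$; $\eta_{\ell+0.5}(P)$ is $P$ at level $\ell+0.5$ and $I$ elsewhere. Cumulant $\overrightarrow F$: start with $F$; for $\ell=1,\dots,\Delta$ replace $\overrightarrow F_{\ell+0.5}$ by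 $\overrightarrow F_{\ell+0.5}\cdot U_\ell\overrightarrow F_{\ell-0.5}U_\ell^{-1}$. Back-cumulant $\overleftarrow F$: start with $F$; for $\ell=\Delta,\dots,1$ replace $\overleftarrow F_{\ell-0.5}$ by $\overleftarrow F_{\ell-0.5}\cdot U_\ell^{-1}\overleftarrow F_{\ell+0.5}U_\ell$. $F(u)=\prod_j\eta_{\ell_j-0.5}(S_j^{u_j})$. The faults $F$ flip the $j$-th outcome iff $[\overrightarrow F_{\ell_j-0.5},S_j]=1$, and flip the check $u$ iff the sum of the flips over $j$ with $u_j=1$ is $1$ mod 2. *)

(* Clifford circuits modelled with genuine quantum semantics
   (matrices over algC on the 2^n-dimensional Hilbert space), Paulis modulo
   phases as pairs of F_2 row vectors (x | z). *)
From HB Require Import structures.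
From mathcomp Require Import all_boot all_order all_algebra algC.
Set Implicit Arguments. Unset Strict Implicit. Unset Printing Implicit Defensive.
Import Order.TTheory GRing.Theory Num.Theory.
Local Open Scope ring_scope.

(* An n-qubit Pauli modulo phases: X^x Z^z, encoded by (x, z). *)
Definition pauli (n : nat) := ('rV['F_2]_n * 'rV['F_2]_n)%type.
Definition pid n : pauli n := (0, 0).
Definition pmul n (p q : pauli n) : pauli n := (p.1 + q.1, p.2 + q.2).
Definition ppow n (p : pauli n) (a : 'F_2) : pauli n := (a *: p.1, a *: p.2).
(* [P,Q] in Z_2 : 0 iff P and Q commute *)
Definition pcomm n (p q : pauli n) : 'F_2 :=
  \sum_(i < n) (p.1 ord0 i * q.2 ord0 i + p.2 ord0 i * q.1 ord0 i).

Definition cmx n := 'M[algC]_(2 ^ n).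
Definition qbit n (q : 'I_n) (a : 'I_(2 ^ n)) : bool := odd (a %/ 2 ^ q).
(* the matrix X^x Z^z *)
Definition pmat n (p : pauli n) : cmx n :=
  \matrix_(a, b)
    if [forall q, qbit q a == (qbit q b) (+) (p.1 ord0 q != 0%R)]
    then (-1) ^+ (\sum_(q < n) ((p.2 ord0 q != 0%R) && qbit q b))%N
    else 0.
(* the Hermitian Pauli (-1)^s i^{|x & z|} X^x Z^z *)
Definition hmat n (s : bool) (p : pauli n) : cmx n :=
  ((-1) ^+ s * 'i ^+ (\sum_(q < n) ((p.1 ord0 q != 0%R) && (p.2 ord0 q != 0%R)))%N) *: pmat p.

Definition adjmx n (U : cmx n) : cmx n := (map_mx Num.conj U)^T.
Definition unitary n (U : cmx n) : Prop := U *m adjmx U = 1%:M.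
(* U is a Clifford unitary: unitary, and conjugation maps Paulis to Paulis up
   to a phase (M = c Q iff M Q is scalar, since Q^2 = +-1) *)
Definition clifford n (U : cmx n) : Prop :=
  unitary U /\ forall p : pauli n, exists q : pauli n,
    is_scalar_mx (U *m pmat p *m invmx U *m pmat q).
Definition conjP n (U : cmx n) (p : pauli n) : pauli n :=
  odflt (pid n) [pick q : pauli n | is_scalar_mx (U *m pmat p *m invmx U *m pmat q)].

Definition Xq n (q : 'I_n) : pauli n := (\row_i (i == q)%:R, 0).
Definition Zq n (q : 'I_n) : pauli n := (0, \row_i (i == q)%:R).
Definition gate_supp n (U : cmx n) : {set 'I_n} :=
  [set q | ~~ ((U *m pmat (Xq q) == pmat (Xq q) *m U) &&
               (U *m pmat (Zq q) == pmat (Zq q) *m U))].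
Definition pauli_supp n (p : pauli n) : {set 'I_n} :=
  [set q | (p.1 ord0 q != 0%R) || (p.2 ord0 q != 0%R)].

Inductive op (n : nat) :=
  | Gate of cmx n
  | Meas of bool & pauli n.    (* measurement of the Hermitian Pauli hmat s S *)

(* a circuit: operations in circuit order, each with its level *)
Definition circuit n := seq (op n * nat).

Definition op_supp n (o : op n) : {set 'I_n} :=
  match o with Gate U => gate_supp U | Meas _ P => pauli_supp P end.

Definition wf_circuit n (C : circuit n) : Prop :=
  [/\ all (fun o => 0 < o.2)%N C,
      sorted leq [seq o.2 | o <- C],
      (forall (i : 'I_(size C)) U,
         (nth (Gate 1%:M, 0%N) C i).1 = Gate U -> clifford U) &
      (forall i j : 'I_(size C), i != j ->
         (nth (Gate 1%:M, 0%N) C i).2 = (nth (Gate 1%:M, 0%N) C j).2 ->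
         [disjoint op_supp (nth (Gate 1%:M, 0%N) C i).1
                 & op_supp (nth (Gate 1%:M, 0%N) C j).1])].

Definition depth n (C : circuit n) : nat := \max_(o <- C) o.2.

Definition meas n (C : circuit n) : seq (bool * pauli n * nat) :=
  pmap (fun o => match o.1 with Meas s P => Some (s, P, o.2) | _ => None end) C.
Definition nmeas n (C : circuit n) : nat := size (meas C).
Definition measP n (C : circuit n) (j : nat) : pauli n :=
  (nth (false, pid n, 0%N) (meas C) j).1.2.
Definition measL n (C : circuit n) (j : nat) : nat :=
  (nth (false, pid n, 0%N) (meas C) j).2.

Definition Ulev n (C : circuit n) (l : nat) : cmx n :=
  foldl (fun acc o => match o with
                      | (Gate U, l') => if l' == l then U *m acc else acc
                      | _ => acc end) 1%:M C.

Definition proj n (s : bool) (P : pauli n) (b : 'F_2) : cmx n :=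
  (2%:R)^-1 *: (1%:M + (-1) ^+ (b != 0%R) *: hmat s P).
Fixpoint kraus n (ops : seq (op n * nat)) (o : seq 'F_2) : cmx n :=
  match ops with
  | [::] => 1%:M
  | (Gate U, _) :: t => kraus t o *m U
  | (Meas s P, _) :: t =>
      match o with
      | b :: o' => kraus t o' *m proj s P b
      | [::] => kraus t [::] *m proj s P 0
      end
  end.
Definition outcome_prob n (C : circuit n) (psi : 'cV[algC]_(2 ^ n))
    (o : 'rV['F_2]_(nmeas C)) : algC :=
  \sum_(i < 2 ^ n) `|(kraus C [seq o ord0 j | j <- enum 'I_(nmeas C)] *m psi) i 0| ^+ 2.
Definition normalized n (psi : 'cV[algC]_(2 ^ n)) : Prop :=
  \sum_(i < 2 ^ n) `|psi i 0| ^+ 2 = 1.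
Definition outcome_code n (C : circuit n) (o : 'rV['F_2]_(nmeas C)) : Prop :=
  exists psi, @normalized n psi /\ @outcome_prob n C psi o != 0.
Arguments outcome_code {n} C o.
Definition linear_code m (O : 'rV['F_2]_m -> Prop) : Prop :=
  O 0 /\ forall a b, O a -> O b -> O (a + b).
Definition in_perp m (O : 'rV['F_2]_m -> Prop) (u : 'rV['F_2]_m) : Prop :=
  forall o, O o -> \sum_(j < m) u ord0 j * o ord0 j = 0.

(* component i is the level i + 0.5, i = 0..Delta *)
Definition fault n (D : nat) := {ffun 'I_D.+1 -> pauli n}.
Definition fcomm n D (F G : fault n D) : 'F_2 := \sum_(i < D.+1) pcomm (F i) (G i).

Fixpoint cumn n (C : circuit n) (F : nat -> pauli n) (l : nat) : pauli n :=
  match l with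
  | 0 => F 0%N
  | l'.+1 => pmul (F l) (conjP (Ulev C l) (cumn C F l'))
  end.
Definition cumulant n (C : circuit n) (F : fault n (depth C)) : fault n (depth C) :=
  [ffun i : 'I_(depth C).+1 => cumn C (fun k => F (inord k)) i].

(* bk k = back-cumulant component at index depth - k *)
Fixpoint bkn n (C : circuit n) (F : nat -> pauli n) (k : nat) : pauli n :=
  match k with
  | 0 => F (depth C)
  | k'.+1 => pmul (F (depth C - k)%N)
                  (conjP (invmx (Ulev C (depth C - k')%N)) (bkn C F k'))
  end.
Definition backcumulant n (C : circuit n) (F : fault n (depth C)) : fault n (depth C) :=
  [ffun i : 'I_(depth C).+1 => bkn C (fun k => F (inord k)) (depth C - i)%N].

Definition faultOf n (C : circuit n) (u : 'rV['F_2]_(nmeas C)) : fault n (depth C) :=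
  [ffun i : 'I_(depth C).+1 =>
     \big[@pmul n / pid n]_(j < nmeas C | (measL C j).-1 == i)
        ppow (measP C j) (u ord0 j)].

Arguments cumulant {n} C F.
Arguments backcumulant {n} C F.
Arguments faultOf {n} C u.
Arguments fcomm {n D} F G.

From mathcomp Require Import all_boot all_order all_algebra algC.
From mathcomp Require Import zify.
Set Implicit Arguments. Unset Strict Implicit. Unset Printing Implicit Defensive.
Import GRing.Theory Num.Theory.
Local Open Scope ring_scope.

(* Conjugation by a unitary that normalizes the Pauli group (a product of
   Clifford gates, in particular each U_l) induces a symplectic bijection of
   the Paulis modulo phases, so conjugation by U^-1 is its adjoint for the
   commutation form [.,.].  Unfolding the cumulant and the back-cumulant level
   by level, this adjointness moves each conjugation across [.,.], and
   [F, back-cumulant(G)] telescopes to the sum over levels of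
   [cumulant(F)_l, G_l].  For G = F(u), bilinearity of [.,.] splits this sum
   over the measurements. *)

Lemma F2_cases (a : 'F_2) : a = 0 \/ a = 1.
Proof. by case: a => [[|[|k]]] //= lt_a2; [left | right]; apply/val_inj. Qed.

Lemma F2_eq (a b : 'F_2) : (a != 0) = (b != 0) -> a = b.
Proof. by case: (F2_cases a) => ->; case: (F2_cases b) => ->. Qed.

Lemma F2_addb (a b : 'F_2) : (a + b != 0) = (a != 0) (+) (b != 0).
Proof. by case: (F2_cases a) => ->; case: (F2_cases b) => ->. Qed.

Lemma F2_mulb (a b : 'F_2) : (a * b != 0) = (a != 0) && (b != 0).
Proof. by case: (F2_cases a) => ->; case: (F2_cases b) => ->. Qed.

Lemma F2_addrr (a : 'F_2) : a + a = 0.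
Proof. by case: (F2_cases a) => ->; apply/eqP. Qed.

Lemma F2_addr_eq0 (a b : 'F_2) : a + b = 0 -> a = b.
Proof. by case: (F2_cases a) => ->; case: (F2_cases b) => -> /eqP. Qed.

Definition signF2 (a : 'F_2) : algC := (-1) ^+ (a != 0).

Lemma signF2D a b : signF2 (a + b) = signF2 a * signF2 b.
Proof. by rewrite /signF2 F2_addb signr_addb. Qed.

Lemma signF2_0 : signF2 0 = 1.
Proof. by rewrite /signF2 eqxx. Qed.

Lemma signF2_sum (I : finType) (P : pred I) (f : I -> 'F_2) :
  signF2 (\sum_(i | P i) f i) = \prod_(i | P i) signF2 (f i).
Proof. exact: (big_morph signF2 signF2D signF2_0). Qed.

Lemma signF2K a : signF2 a * signF2 a = 1.
Proof. by rewrite /signF2 -signr_addb addbb. Qed.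

Lemma signF2_neq0 a : signF2 a != 0.
Proof. by rewrite signr_eq0. Qed.

Lemma signF2_inj : injective signF2.
Proof. by move=> a b /signr_inj; apply: F2_eq. Qed.

Lemma eq_nat_bits k a b : (a < 2 ^ k)%N -> (b < 2 ^ k)%N ->
  (forall q, (q < k)%N -> odd (a %/ 2 ^ q) = odd (b %/ 2 ^ q)) -> a = b.
Proof.
elim: k a b => [|k IH] a b; first by rewrite expn0 !ltnS !leqn0 => /eqP-> /eqP->.
move=> lt_a lt_b eq_bits.
have odd_ab : odd a = odd b by have := eq_bits 0%N isT; rewrite expn0 !divn1.
suff half_ab : a./2 = b./2.
  by rewrite -(odd_double_half a) -(odd_double_half b) odd_ab half_ab.
apply: IH; rewrite -?divn2 ?ltn_divLR // -?expnSr //.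
by move=> q lt_qk; rewrite -!divnMA -expnS; apply: eq_bits.
Qed.

Section SymplecticForm.
Variable n : nat.
Implicit Types p q : pauli n.

Lemma pmul_pid p q : pmul p q = pid n -> p = q.
Proof.
case: p q => [x z] [x' z']; rewrite /pmul /pid /= => -[/rowP eq_x /rowP eq_z].
by congr pair; apply/rowP => i; apply: F2_addr_eq0;
  [have := eq_x i | have := eq_z i]; rewrite !mxE.
Qed.

Lemma pmulxx p : pmul p p = pid n.
Proof. by congr pair; apply/rowP => i; rewrite !mxE F2_addrr. Qed.

Lemma pcomm_cross p q :
  \sum_i p.2 ord0 i * q.1 ord0 i = pcomm p q + \sum_i q.2 ord0 i * p.1 ord0 i.
Proof.
rewrite /pcomm -big_split /=; apply: eq_bigr => i _.
by case: (F2_cases (p.1 ord0 i)) => ->; case: (F2_cases (p.2 ord0 i)) => ->;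
  case: (F2_cases (q.1 ord0 i)) => ->; case: (F2_cases (q.2 ord0 i)) => ->; apply/eqP.
Qed.

Lemma pcommDl p p' q : pcomm (pmul p p') q = pcomm p q + pcomm p' q.
Proof. by rewrite /pcomm -big_split; apply: eq_bigr => i _; rewrite !mxE !mulrDl addrACA. Qed.

Lemma pcommDr p q q' : pcomm p (pmul q q') = pcomm p q + pcomm p q'.
Proof. by rewrite /pcomm -big_split; apply: eq_bigr => i _; rewrite !mxE !mulrDr addrACA. Qed.

Lemma pcomm0r p : pcomm p (pid n) = 0.
Proof. by rewrite /pcomm big1 // => i _; rewrite !mxE !mulr0 addr0. Qed.

Lemma pcommZr p q a : pcomm p (ppow q a) = a * pcomm p q.
Proof.
rewrite /pcomm mulr_sumr; apply: eq_bigr => i _.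
by rewrite !mxE mulrDr (mulrCA (p.1 ord0 i)) (mulrCA (p.2 ord0 i)).
Qed.

End SymplecticForm.

Section Bits.
Variable n : nat.
Implicit Types (a b : 'I_(2 ^ n)) (v w : {ffun 'I_n -> bool}).

Definition bits a : {ffun 'I_n -> bool} := [ffun q => qbit q a].

Lemma bits_inj : injective bits.
Proof.
move=> a b eq_ab; apply/val_inj/(@eq_nat_bits n); rewrite ?ltn_ord // => q lt_qn.
by have := congr1 (fun v : {ffun 'I_n -> bool} => v (Ordinal lt_qn)) eq_ab; rewrite !ffunE.
Qed.

Lemma bits_bij : bijective bits.
Proof. by apply: inj_card_bij bits_inj _; rewrite card_ffun !card_ord card_bool. Qed.

Definition of_bits v : 'I_(2 ^ n) :=
  odflt (Ordinal (expn_gt0 2 n)) [pick a | bits a == v].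

Lemma of_bitsK : cancel of_bits bits.
Proof.
move=> v; rewrite /of_bits; case: pickP => [a /eqP // | no_a].
by have [g _ gK] := bits_bij; have := no_a (g v); rewrite gK eqxx.
Qed.

Lemma bitsK : cancel bits of_bits.
Proof. by move=> a; apply: bits_inj; rewrite of_bitsK. Qed.

Definition xorf v w : {ffun 'I_n -> bool} := [ffun q => v q (+) w q].

Lemma eq_xorf v w : (v == xorf v w) = (w == [ffun => false]).
Proof.
apply/eqP/eqP => [/ffunP vw | ->]; apply/ffunP => q; rewrite !ffunE ?addbF //.
by have := vw q; rewrite ffunE; case: (v q); case: (w q).
Qed.

End Bits.

Section PauliMatrices.
Variable n : nat.
Implicit Types (p q r : pauli n) (a b : 'I_(2 ^ n)).

Definition xbits p : {ffun 'I_n -> bool} := [ffun q => p.1 ord0 q != 0].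

Definition zphase p b : algC := \prod_q (-1) ^+ ((p.2 ord0 q != 0) && bits b q).

Lemma pmatE p a b :
  pmat p a b = if bits a == xorf (bits b) (xbits p) then zphase p b else 0.
Proof.
rewrite mxE (big_morph _ (@exprD _ _) (expr0 _)).
have -> : [forall q, qbit q a == qbit q b (+) (p.1 ord0 q != 0)]
          = (bits a == xorf (bits b) (xbits p)).
  apply/forallP/eqP => [eq_ab | eq_ab q].
    by apply/ffunP => q; rewrite !ffunE; apply/eqP.
  by have := congr1 (fun v : {ffun 'I_n -> bool} => v q) eq_ab; rewrite !ffunE => ->.
by case: eqP => // _; apply: eq_bigr => q _; rewrite ffunE.
Qed.

Lemma xbits_pmul p q : xbits (pmul p q) = xorf (xbits p) (xbits q).
Proof. by apply/ffunP => i; rewrite !ffunE mxE F2_addb. Qed.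

(* pmat p is X^(x_p) Z^(z_p): the phase comes from moving Z^(z_p) past X^(x_q). *)
Lemma pmatM p q :
  pmat p *m pmat q = signF2 (\sum_i p.2 ord0 i * q.1 ord0 i) *: pmat (pmul p q).
Proof.
apply/matrixP => a b; set c := of_bits (xorf (bits b) (xbits q)).
rewrite mxE [RHS]mxE (bigD1 c) //= big1 ?addr0; last first.
  move=> d ne_dc; rewrite (pmatE q); case: eqP => [eq_d | _]; last by rewrite mulr0.
  by move: ne_dc; rewrite /c -eq_d bitsK eqxx.
rewrite !pmatE of_bitsK xbits_pmul.
have -> : xorf (xorf (bits b) (xbits q)) (xbits p) = xorf (bits b) (xorf (xbits p) (xbits q)).
  by apply/ffunP => i; rewrite !ffunE addbAC addbA.
case: eqP => _; last by rewrite !mul0r mulr0.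
rewrite eqxx signF2_sum /zphase -!big_split /=; apply: eq_bigr => i _.
rewrite /c of_bitsK !ffunE !mxE /signF2 F2_addb F2_mulb.
case: (qbit i b); case: (p.1 ord0 i != 0); case: (q.1 ord0 i != 0);
  case: (p.2 ord0 i != 0); case: (q.2 ord0 i != 0);
  by rewrite /= ?expr0 ?expr1 ?mulr1 ?mul1r ?mulrNN ?mulr1.
Qed.

Lemma pmat_pid : pmat (pid n) = 1%:M.
Proof.
apply/matrixP => a b; rewrite pmatE mxE.
have -> : xorf (bits b) (xbits (pid n)) = bits b.
  by apply/ffunP => i; rewrite !ffunE mxE eqxx addbF.
rewrite (inj_eq (@bits_inj n)); case: eqP => // _.
by rewrite /zphase big1 // => i _; rewrite mxE eqxx.
Qed.

Definition psign p : algC := signF2 (\sum_i p.2 ord0 i * p.1 ord0 i).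

Lemma psignK p : psign p * psign p = 1.
Proof. exact: signF2K. Qed.

Lemma pmat_sqr p : pmat p *m pmat p = (psign p)%:M.
Proof. by rewrite pmatM pmulxx pmat_pid scalemx1. Qed.

Lemma pmat_neq0 p : pmat p != 0.
Proof.
apply: contra_neq (signF2_neq0 (\sum_i p.2 ord0 i * p.1 ord0 i)) => pmat0.
pose a : 'I_(2 ^ n) := of_bits [ffun => false].
have /matrixP/(_ a a) := pmat_sqr p.
by rewrite pmat0 mul0mx !mxE eqxx mulr1n => /esym.
Qed.

Lemma pmat_scalar r c : pmat r = c%:M -> r = pid n.
Proof.
move=> pmat_r.
have diag a : pmat r a a = c by rewrite pmat_r mxE eqxx mulr1n.
have c_neq0 : c != 0.
  by apply: contra_neq (pmat_neq0 r) => c0; rewrite pmat_r c0 -scalemx1 scale0r.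
pose a0 : 'I_(2 ^ n) := of_bits [ffun => false].
have x0 : xbits r = [ffun => false].
  apply/eqP; move: (diag a0); rewrite pmatE eq_xorf; case: eqP => // _ c0.
  by rewrite c0 eqxx in c_neq0.
have phase a : zphase r a = c by move: (diag a); rewrite pmatE eq_xorf x0 eqxx.
have c1 : c = 1.
  by rewrite -(phase a0) /zphase big1 // => i _; rewrite of_bitsK ffunE andbF.
case: r x0 phase {pmat_r diag} => x z x0 phase.
congr pair; apply/rowP => i; rewrite !mxE.
  apply/eqP; have := congr1 (fun v : {ffun 'I_n -> bool} => v i) x0.
  by rewrite !ffunE => /negbFE.
pose ai : 'I_(2 ^ n) := of_bits [ffun j => j == i].
have := phase ai; rewrite c1 /zphase (bigD1 i) //= big1 => [|j /negbTE ne_ji]; last first.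
  by rewrite of_bitsK ffunE ne_ji andbF.
rewrite of_bitsK ffunE eqxx andbT mulr1 => sign_zi.
by apply: signF2_inj; rewrite signF2_0; exact: sign_zi.
Qed.

Lemma pmat_commute p q : pmat p *m pmat q = signF2 (pcomm p q) *: (pmat q *m pmat p).
Proof.
rewrite !pmatM scalerA -signF2D -pcomm_cross; congr (_ *: pmat _).
by rewrite /pmul addrC [p.2 + _]addrC.
Qed.

End PauliMatrices.

Lemma scaler_injv (K : fieldType) (V : lmodType K) (v : V) :
  v != 0 -> injective ( *:%R^~ v : K -> V).
Proof.
move=> v_neq0 a b /eqP; rewrite -subr_eq0 -scalerBl scaler_eq0 (negbTE v_neq0) orbF.
by rewrite subr_eq0 => /eqP.
Qed.

Section PauliNormalizing.
Variable n : nat.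
Implicit Types (p q : pauli n) (W U V : cmx n).

Definition pauli_normalizing W : Prop := W \in unitmx /\
  forall p, exists q, exists2 c : algC, c != 0 & W *m pmat p *m invmx W = c *: pmat q.

Lemma conjP_eq W p q c : c != 0 -> W *m pmat p *m invmx W = c *: pmat q -> conjP W p = q.
Proof.
move=> c_neq0 conj_p; rewrite /conjP; case: pickP => [q' /is_scalar_mxP [d] | no_q] /=.
  pose e := c * signF2 (\sum_i q.2 ord0 i * q'.1 ord0 i).
  have e_neq0 : e != 0 by rewrite mulf_neq0 // signF2_neq0.
  rewrite conj_p -scalemxAl pmatM scalerA -/e => /(congr1 ( *:%R e^-1)).
  rewrite scalerA mulVf // scale1r => pmat_qq'.
  apply/esym/pmul_pid/(@pmat_scalar _ _ (e^-1 * d)).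
  by rewrite pmat_qq' -[d%:M]scalemx1 scalerA scalemx1.
case/negP: (no_q q); apply/is_scalar_mxP; exists (c * psign q).
by rewrite conj_p -scalemxAl pmat_sqr -[(psign q)%:M]scalemx1 scalerA scalemx1.
Qed.

Lemma normalizing_conjP W p : pauli_normalizing W ->
  exists2 c : algC, c != 0 & W *m pmat p *m invmx W = c *: pmat (conjP W p).
Proof.
by case=> _ /(_ p) [q [c c_neq0 conj_p]]; exists c; rewrite ?(conjP_eq c_neq0 conj_p).
Qed.

Lemma normalizing1 : pauli_normalizing 1%:M.
Proof.
split=> [|p]; first exact: unitmx1.
by exists p; exists 1; rewrite ?oner_eq0 // invmx1 mul1mx mulmx1 scale1r.
Qed.

Lemma invmxM U V : U \in unitmx -> V \in unitmx -> invmx (U *m V) = invmx V *m invmx U.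
Proof.
move=> U_unit V_unit; have UV_unit : U *m V \in unitmx by rewrite unitmx_mul U_unit.
by rewrite -[RHS]mulmx1 -(mulmxV UV_unit) !mulmxA mulmxKV // mulVmx // mul1mx.
Qed.

Lemma normalizingM U V : pauli_normalizing U -> pauli_normalizing V ->
  pauli_normalizing (U *m V).
Proof.
move=> [U_unit normU] [V_unit normV]; split=> [|p]; first by rewrite unitmx_mul U_unit.
have [q1 [c1 c1_neq0 conj_V]] := normV p; have [q2 [c2 c2_neq0 conj_U]] := normU q1.
exists q2; exists (c1 * c2); first by rewrite mulf_neq0.
have -> : U *m V *m pmat p *m invmx (U *m V) = U *m (V *m pmat p *m invmx V) *m invmx U.
  by rewrite invmxM // !mulmxA.
by rewrite conj_V -scalemxAr -scalemxAl conj_U scalerA.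
Qed.

Lemma clifford_normalizing U : clifford U -> pauli_normalizing U.
Proof.
move=> [/mulmx1_unit [U_unit _] cliffU]; split=> // p.
have [q /is_scalar_mxP [d scal_d]] := cliffU p.
have conj_p : U *m pmat p *m invmx U = (d * psign q) *: pmat q.
  have := congr1 (mulmx^~ (pmat q)) scal_d.
  rewrite -mulmxA pmat_sqr mul_mx_scalar mul_scalar_mx => /(congr1 ( *:%R (psign q))).
  by rewrite !scalerA psignK scale1r => ->; rewrite mulrC.
exists q; exists (d * psign q) => //.
apply: contra_neq (pmat_neq0 p) => d0.
by rewrite -(mulKmx U_unit (pmat p)) -[_ *m pmat p](mulmxKV U_unit) conj_p d0 scale0r mul0mx mulmx0.
Qed.

Lemma conj_commute_sign W A B Q Q' (c c' s t : algC) :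
    W \in unitmx -> c != 0 -> c' != 0 -> Q' *m Q != 0 ->
    A *m B = s *: (B *m A) -> Q *m Q' = t *: (Q' *m Q) ->
    W *m A *m invmx W = c *: Q -> W *m B *m invmx W = c' *: Q' -> s = t.
Proof.
move=> W_unit c_neq0 c'_neq0 Q'Q_neq0 AB QQ' conjA conjB.
have conjM X Y : W *m (X *m Y) *m invmx W = (W *m X *m invmx W) *m (W *m Y *m invmx W).
  by rewrite !mulmxA mulmxKV.
have := congr1 (fun M => W *m M *m invmx W) AB.
rewrite /= -scalemxAr -scalemxAl !conjM conjA conjB -!scalemxAl -!scalemxAr QQ' !scalerA.
move=> /(scaler_injv Q'Q_neq0) /eqP.
rewrite [_ * t]mulrC -[s * _ * _]mulrA [c' * c]mulrC.
by rewrite (inj_eq (mulIf (mulf_neq0 c_neq0 c'_neq0))) => /eqP.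
Qed.

Lemma pcomm_conjP W p p' : pauli_normalizing W ->
  pcomm (conjP W p) (conjP W p') = pcomm p p'.
Proof.
move=> normW; have [c c_neq0 conj_p] := normalizing_conjP p normW.
have [c' c'_neq0 conj_p'] := normalizing_conjP p' normW.
have Q'Q_neq0 : pmat (conjP W p') *m pmat (conjP W p) != 0.
  by rewrite pmatM scaler_eq0 negb_or signF2_neq0 pmat_neq0.
apply/esym/signF2_inj/(conj_commute_sign normW.1 c_neq0 c'_neq0 Q'Q_neq0
  (pmat_commute p p') (pmat_commute _ _) conj_p conj_p').
Qed.

Lemma conjP_invK W p : pauli_normalizing W -> conjP (invmx W) (conjP W p) = p.
Proof.
move=> normW; have [c c_neq0 conj_p] := normalizing_conjP p normW.
apply: (@conjP_eq _ _ _ c^-1); first by rewrite invr_eq0.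
have -> : pmat (conjP W p) = c^-1 *: (W *m pmat p *m invmx W).
  by rewrite conj_p scalerA mulVf // scale1r.
by rewrite invmxK -scalemxAr -scalemxAl !mulmxA mulVmx ?normW.1 // mul1mx mulmxKV ?normW.1.
Qed.

Lemma pcomm_conjP_adj W p q : pauli_normalizing W ->
  pcomm (conjP W p) q = pcomm p (conjP (invmx W) q).
Proof.
move=> normW; have conjPK : cancel (conjP W) (conjP (invmx W)) by move=> r; apply: conjP_invK.
have conjPKV : cancel (conjP (invmx W)) (conjP W).
  (* an injection of the finite type pauli n into itself is bijective *)
  by apply/bij_can_sym/conjPK/injF_bij/can_inj/conjPK.
by rewrite -{1}(conjPKV q) pcomm_conjP.
Qed.

End PauliNormalizing.

Lemma telescope_pcomm_adjoint n (D : nat) (F G cum bk : nat -> pauli n)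
    (T T' : nat -> pauli n -> pauli n) :
  (forall k p q, pcomm (T k p) q = pcomm p (T' k q)) ->
  cum 0%N = F 0%N -> (forall k, cum k.+1 = pmul (F k.+1) (T k.+1 (cum k))) ->
  bk D = G D -> (forall k, (k < D)%N -> bk k = pmul (G k) (T' k.+1 (bk k.+1))) ->
  \sum_(i < D.+1) pcomm (F i) (bk i) = \sum_(i < D.+1) pcomm (cum i) (G i).
Proof.
move=> adjT cum0 cumS bkD bkS.
have partial k : (k <= D)%N -> \sum_(i < k.+1) pcomm (F i) (bk i) =
    \sum_(i < k) pcomm (cum i) (G i) + pcomm (cum k) (bk k).
  elim: k => [_ | k IH lt_kD]; first by rewrite big_ord1 big_ord0 add0r cum0.
  rewrite big_ord_recr IH ?(ltnW lt_kD) // big_ord_recr /= bkS // pcommDr -adjT cumS pcommDl.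
  by rewrite -!addrA [pcomm (T _ _) _ + _]addrC.
by rewrite partial // bkD big_ord_recr.
Qed.

Lemma Ulev_normalizing n (C : circuit n) l :
  (forall (i : 'I_(size C)) U, (nth (Gate 1%:M, 0%N) C i).1 = Gate U -> clifford U) ->
  pauli_normalizing (Ulev C l).
Proof.
move=> cliffC; rewrite /Ulev; set f := fun acc o => _.
suff foldl_normalizing W : pauli_normalizing W -> pauli_normalizing (foldl f W C).
  exact/foldl_normalizing/normalizing1.
elim: C cliffC W => [|[o l'] C IH] //= cliffC W normW.
apply: IH => [i U|]; first exact: (cliffC (lift ord0 i)).
case: o cliffC => [U|s P] cliffC //=; case: eqP => // _.
exact/normalizingM/normW/clifford_normalizing/(cliffC ord0).
Qed.

Lemma measL_le_depth n (C : circuit n) j : (j < nmeas C)%N -> (measL C j <= depth C)%N.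
Proof.
rewrite /nmeas /measL /depth /meas; elim: C j => [|[o l] C IH] j //=.
rewrite big_cons; case: o => [U|s P] /=; first by move=> /IH /leq_trans; apply; apply: leq_maxr.
case: j => [|j] /=; first by rewrite leq_maxl.
by move=> /IH /leq_trans; apply; apply: leq_maxr.
Qed.

Lemma bkn_subS n (C : circuit n) (G : nat -> pauli n) k : (k < depth C)%N ->
  bkn C G (depth C - k) =
  pmul (G k) (conjP (invmx (Ulev C k.+1)) (bkn C G (depth C - k.+1))).
Proof.
move=> lt_k; have -> /= : (depth C - k = (depth C - k.+1).+1)%N by lia.
have -> : (depth C - (depth C - k.+1).+1 = k)%N by lia.
by have -> : (depth C - (depth C - k.+1) = k.+1)%N by lia.
Qed.

Lemma fcomm_backcumulant n (C : circuit n) (F G : fault n (depth C)) :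
  (forall l, pauli_normalizing (Ulev C l)) ->
  fcomm F (backcumulant C G) = \sum_(i < (depth C).+1) pcomm (cumulant C F i) (G i).
Proof.
move=> normU; pose Fn k := F (inord k); pose Gn k := G (inord k).
have -> : fcomm F (backcumulant C G) =
    \sum_(i < (depth C).+1) pcomm (Fn i) (bkn C Gn (depth C - i)).
  by apply: eq_bigr => i _; rewrite ffunE /Fn inord_val.
have -> : \sum_(i < (depth C).+1) pcomm (cumulant C F i) (G i) =
    \sum_(i < (depth C).+1) pcomm (cumn C Fn i) (Gn i).
  by apply: eq_bigr => i _; rewrite ffunE /Gn inord_val.
apply: (telescope_pcomm_adjoint (cum := cumn C Fn) (bk := fun k => bkn C Gn (depth C - k))
  (T := fun l => conjP (Ulev C l)) (T' := fun l => conjP (invmx (Ulev C l)))) => //.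
- by move=> k p q; apply: pcomm_conjP_adj.
- by rewrite subnn.
- exact: bkn_subS.
Qed.

Lemma sum_pcomm_faultOf n (C : circuit n) (P : fault n (depth C)) u :
  \sum_(i < (depth C).+1) pcomm (P i) (faultOf C u i) =
  \sum_(j < nmeas C) u ord0 j * pcomm (P (inord (measL C j).-1)) (measP C j).
Proof.
have expand i : pcomm (P i) (faultOf C u i) =
    \sum_(j < nmeas C | (measL C j).-1 == i) u ord0 j * pcomm (P i) (measP C j).
  rewrite ffunE (big_morph _ (pcommDr (P i)) (pcomm0r _)).
  by apply: eq_bigr => j _; apply: pcommZr.
rewrite (eq_bigr _ (fun i _ => expand i)) (exchange_big_dep xpredT) //=.
apply: eq_bigr => j _; rewrite (big_pred1 (inord (measL C j).-1)) // => i /=.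
rewrite -(inj_eq val_inj) /= inordK ?[_ == i]eq_sym // ltnS.
exact: leq_trans (leq_pred _) (measL_le_depth (ltn_ord j)).
Qed.

Theorem mainTheorem19 (n : nat) (C : circuit n) (F : fault n (depth C))
    (u : 'rV['F_2]_(nmeas C)) :
  wf_circuit C ->
  linear_code (outcome_code C) ->
  in_perp (outcome_code C) u ->
  \sum_(j < nmeas C)
     u ord0 j * pcomm (cumulant C F (inord (measL C j).-1)) (measP C j)
  = fcomm F (backcumulant C (faultOf C u)).
Proof.
(* The identity holds for every u; the outcome code only matters for reading
   the left-hand side as the flip of a check. *)
move=> [_ _ cliffC _] _ _.
rewrite fcomm_backcumulant ?sum_pcomm_faultOf // => l.
exact: Ulev_normalizing.
Qed.
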